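(* Let $d\ge1$, $N\in\mathbb{N}$, $\alpha,\beta>0$ and $p>1/2$. Let $\mathcal{D}^{\rm te}$ be a distribution on $\mathbb{R}^d\times\{\pm1\}$ with $y\sim U(\{\pm1\})$, having one robust coordinate $r\in[d]$ and $d-1$ non-robust coordinates (all others), no irrelevant coordinates, such that $yx_r=\alpha$ with probability $p$ and $yx_r=-\alpha$ with probability $1-p$, and $yx_i=\beta$ with probability one for every $i\ne r$. For the query $(\bm x_{N+1},y_{N+1})$, let $\bm Z$ be formed with $\bm\Delta=\bm 0$ and define $$\tilde f(\bm P,\bm Q):=\mathbb{E}_{\{(\bm x_n,y_n)\}_{n=1}^{N}\overset{\text{i.i.d.}}{\sim}\mathcal{D}^{\rm te}}\big[y_{N+1}[f(\bm Z;\bm P,\bm Q)]_{d+1,N+1}\big],$$ a random variable depending on the query. Let $\bm P^{\rm std}=\bm P^{\rm adv}:=\begin{bmatrix}\bm 0_{d,d+1}\\ \bm 1_{d+1}^\top\end{bmatrix}$, $\bm Q^{\rm std}:=\begin{bmatrix}\bm 1_{d+1,d}&\bm 0_{d+1}\end{bmatrix}$, $\bm Q^{\rm adv}:=\begin{bmatrix}\bm I_d&\bm 0_d\\ \bm 0_d^\top&0\end{bmatrix}$. Then there exist strictly positive quantities $g_1,g_2>0$ depending only on $d,\alpha,\beta,p$ such that: $\tilde f(\bm P^{\rm std},\bm Q^{\rm std})=g_1(\alpha+(d-1)\beta)$ on the event $y_{N+1}x_{N+1,r}=\alpha$ (probability $p$), and $\tilde f(\bm P^{\rm std},\bm Q^{\rm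 std})=g_1(-\alpha+(d-1)\beta)$ on the event $y_{N+1}x_{N+1,r}=-\alpha$ (probability $1-p$); and $\tilde f(\bm P^{\rm adv},\bm Q^{\rm adv})\le g_2\{-(2p-1)\alpha^2+(d-1)\beta^2\}$ on the event $y_{N+1}x_{N+1,r}=-\alpha$ (probability $1-p$).
   Context: $[n]:=\{1,\dots,n\}$; $U(\mathcal S)$ is the uniform distribution on $\mathcal S$; $\bm 1_a,\bm 1_{a,b},\bm 0_a,\bm 0_{a,b},\bm I_a$ denote all-ones/all-zeros vectors and matrices and the identity. Transformer: given demonstrations $(\bm x_1,y_1),\dots,(\bm x_N,y_N)$, a query $\bm x_{N+1}\in\mathbb{R}^d$ and a perturbation $\bm\Delta\in\mathbb{R}^d$, let $\bm Z\in\mathbb{R}^{(d+1)\times(N+1)}$ have $n$-th column $(\bm x_n^\top,y_n)^\top$ for $n\le N$ and last column $((\bm x_{N+1}+\bm\Delta)^\top,0)^\top$. Let $\bm M:=\begin{bmatrix}\bm I_N&0\\0&0\end{bmatrix}$ and $f(\bm Z;\bm P,\bm Q):=\frac1N\bm P\bm Z\bm M\bm Z^\top\bm Q\bm Z$; $[\cdot]_{d+1,N+1}$ is the $(d+1,N+1)$ entry. Demonstrations and query are i.i.d. from $\mathcal{D}^{\rm te}$. *)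

From mathcomp Require Import all_boot all_order all_algebra.
Set Implicit Arguments. Unset Strict Implicit. Unset Printing Implicit Defensive.
Import Order.TTheory GRing.Theory Num.Theory.
Local Open Scope ring_scope.

Section Transformer.
Variable R : realFieldType.

Definition Zmat (d N : nat) (xs : 'I_N -> 'rV[R]_d) (ys : 'I_N -> R)
    (xq Delta : 'rV[R]_d) : 'M[R]_(d + 1, N + 1) :=
  block_mx (\matrix_(i < d, n < N) xs n 0 i) (xq + Delta)^T
           (\matrix_(i < 1, n < N) ys n) (0 : 'M[R]_(1, 1)).

Definition Mmask (N : nat) : 'M[R]_(N + 1) :=
  block_mx (1%:M : 'M[R]_N) 0 0 (0 : 'M[R]_1).

Definition ftf (d N : nat) (Z : 'M[R]_(d + 1, N + 1)) (P Q : 'M[R]_(d + 1)) :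
    'M[R]_(d + 1, N + 1) :=
  (N%:R)^-1 *: (P *m Z *m Mmask N *m Z^T *m Q *m Z).

Definition last_entry (d N : nat) (A : 'M[R]_(d + 1, N + 1)) : R :=
  A (rshift d (ord0 : 'I_1)) (rshift N (ord0 : 'I_1)).

Definition Pstd (d : nat) : 'M[R]_(d + 1) :=
  col_mx (0 : 'M[R]_(d, d + 1)) (const_mx 1 : 'M[R]_(1, d + 1)).
Definition Padv (d : nat) : 'M[R]_(d + 1) := Pstd d.

Definition Qstd (d : nat) : 'M[R]_(d + 1) :=
  row_mx (const_mx 1 : 'M[R]_(d + 1, d)) (0 : 'M[R]_(d + 1, 1)).

Definition Qadv (d : nat) : 'M[R]_(d + 1) :=
  block_mx (1%:M : 'M[R]_d) 0 0 (0 : 'M[R]_1).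

(* A (discrete) distribution D^te on R^d x R given by finitely many atoms
   j : I with weights w j at points (xs j, ys j).
   ftilde P Q xq yq = E_{(x_n,y_n)_{n<=N} iid ~ D}[ yq * [f(Z;P,Q)]_{d+1,N+1} ]
   where Z is built with Delta = 0 and query (xq, yq). *)
Definition ftilde (d N : nat) (I : finType) (w : I -> R) (xs : I -> 'rV[R]_d)
    (ys : I -> R) (P Q : 'M[R]_(d + 1)) (xq : 'rV[R]_d) (yq : R) : R :=
  \sum_(t : {ffun 'I_N -> I})
     (\prod_(n < N) w (t n)) *
     (yq * last_entry (ftf (Zmat (fun n => xs (t n)) (fun n => ys (t n)) xq 0) P Q)).

Definition is_distr (I : finType) (w : I -> R) : Prop :=
  (forall j, 0 <= w j) /\ \sum_j w j = 1.

End Transformer.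

(* For P^std the last row of P Z is 1^T Z and the mask M drops the query
   column, so [f(Z)]_{d+1,N+1} = (1/N) sum_n (1^T z_n) (z_n^T Q z_{N+1}): an
   empirical mean over the i.i.d. demonstrations, whose expectation is a
   one-sample expectation.  Multiplying features by labels (y^2 = 1) makes
   every coordinate but the robust one deterministic, so that expectation is a
   two-point average over y x_r = +-alpha.  With A = (d-1) beta + 1,
   B = (d-1) beta^2 and c = 2p - 1 this gives g1 = E[(y x_r + A)^2] and, on
   y_{N+1} x_{N+1,r} = -alpha, the adversarial value
   (A + c alpha)(B - c alpha^2) - 4p(1-p) alpha^3, whence g2 = A + c alpha. *)

From mathcomp Require Import all_boot all_order all_algebra.
From mathcomp Require Import ring lra.
Set Implicit Arguments.
Unset Strict Implicit.
Unset Printing Implicit Defensive.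
Import Order.TTheory GRing.Theory Num.Theory.
Local Open Scope ring_scope.

Section LastEntry.
Variables (R : realFieldType) (d N : nat).
Variables (xs : 'I_N -> 'rV[R]_d) (ys : 'I_N -> R) (xq : 'rV[R]_d).

Definition Zdata : 'M[R]_(d + 1, N) :=
  col_mx (\matrix_(i < d, n < N) xs n 0 i) (\matrix_(i < 1, n < N) ys n).

Lemma Zmat_Delta0 : Zmat xs ys xq 0 = row_mx Zdata (col_mx xq^T 0).
Proof. by rewrite /Zmat addr0 block_mxEh. Qed.

Lemma Zdata_col_sum n : \sum_(k < d + 1) Zdata k n = \sum_(i < d) xs n 0 i + ys n.
Proof.
rewrite big_split_ord big_ord1 col_mxEd mxE; congr (_ + _).
by apply: eq_bigr => i _; rewrite col_mxEu mxE.
Qed.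

Lemma last_entry_ftf_Pstd (Q : 'M[R]_(d + 1)) :
  last_entry (ftf (Zmat xs ys xq 0) (Pstd R d) Q) =
  N%:R^-1 * \sum_(n < N) (\sum_(k < d + 1) Zdata k n)
                         * \sum_(k < d + 1) Zdata k n * (Q *m col_mx xq^T 0) k 0.
Proof.
rewrite /last_entry /ftf Zmat_Delta0.
have masked : row_mx Zdata (col_mx xq^T 0) *m Mmask R N = row_mx Zdata 0.
  by rewrite /Mmask mul_row_block !mulmx0 mulmx1 !addr0.
rewrite -(mulmxA (Pstd R d)) masked -(mulmxA (Pstd R d)) tr_row_mx mul_row_col.
rewrite mul0mx addr0 mxE mul_mx_row row_mxEr /Pstd -!mulmxA mul_col_mx col_mxEd.
congr (_ * _); rewrite mulmxA mxE; apply: eq_bigr => n _.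
rewrite !mxE; congr (_ * _); apply: eq_bigr => k _; rewrite mxE ?mul1r //.
Qed.

Lemma last_entry_std :
  last_entry (ftf (Zmat xs ys xq 0) (Pstd R d) (Qstd R d)) =
  N%:R^-1 * \sum_(n < N) (\sum_(i < d) xs n 0 i + ys n) ^+ 2 * \sum_(i < d) xq 0 i.
Proof.
rewrite last_entry_ftf_Pstd; congr (_ * _); apply: eq_bigr => n _.
have Qstd_query k : (Qstd R d *m col_mx xq^T 0) k 0 = \sum_(i < d) xq 0 i.
  rewrite /Qstd mul_row_col mul0mx addr0 mxE.
  by apply: eq_bigr => i _; rewrite !mxE mul1r.
under [X in _ * X]eq_bigr do rewrite Qstd_query.
by rewrite -mulr_suml Zdata_col_sum expr2 mulrA.
Qed.

Lemma last_entry_adv :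
  last_entry (ftf (Zmat xs ys xq 0) (Padv R d) (Qadv R d)) =
  N%:R^-1 * \sum_(n < N) (\sum_(i < d) xs n 0 i + ys n)
                         * \sum_(i < d) xs n 0 i * xq 0 i.
Proof.
rewrite last_entry_ftf_Pstd; congr (_ * _); apply: eq_bigr => n _.
rewrite Zdata_col_sum /Qadv mul_block_col !mul0mx mul1mx !addr0; congr (_ * _).
rewrite big_split_ord big_ord1 !col_mxEd !mxE mulr0 /= addr0.
by apply: eq_bigr => i _; rewrite !col_mxEu !mxE.
Qed.

End LastEntry.

Section IidExpectation.
Variables (R : realFieldType) (N : nat) (I : finType) (w : I -> R).
Hypothesis w_sum1 : \sum_j w j = 1.

Lemma expect_coord (h : I -> R) (m : 'I_N) :
  \sum_(t : {ffun 'I_N -> I}) (\prod_(n < N) w (t n)) * h (t m) = \sum_j w j * h j.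
Proof.
pose F n j := w j * (if n == m then h j else 1).
transitivity (\prod_(n < N) \sum_j F n j).
  rewrite bigA_distr_bigA; apply: eq_bigr => t _.
  rewrite (bigD1 m) // [RHS](bigD1 m) //= /F eqxx mulrAC; congr (_ * _).
  by apply: eq_bigr => n /negbTE ->; rewrite mulr1.
rewrite (bigD1 m) //= [X in _ * X]big1 ?mulr1 => [|n /negbTE nm].
  by apply: eq_bigr => j _; rewrite /F eqxx.
by under eq_bigr do rewrite /F nm mulr1.
Qed.

Lemma expect_empirical_mean (G : I -> R) : (0 < N)%N ->
  \sum_(t : {ffun 'I_N -> I}) (\prod_(n < N) w (t n)) * (N%:R^-1 * \sum_(n < N) G (t n))
  = \sum_j w j * G j.
Proof.
move=> N_gt0.
transitivity (N%:R^-1 * \sum_(n < N) \sum_(t : {ffun 'I_N -> I})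
                (\prod_(n < N) w (t n)) * G (t n)).
  rewrite exchange_big mulr_sumr; apply: eq_bigr => t _.
  by rewrite mulrCA mulr_sumr.
under eq_bigr do rewrite expect_coord.
rewrite sumr_const card_ord mulrnAr -mulrnAl -mulr_natr mulVf ?mul1r //.
by rewrite pnatr_eq0 -lt0n.
Qed.

End IidExpectation.

Section WeightedSums.
Variables (R : realFieldType) (I : finType) (w : I -> R).
Hypotheses (w_ge0 : forall j, 0 <= w j) (w_sum1 : \sum_j w j = 1).

Lemma eq_expect (F G : I -> R) : (forall j, 0 < w j -> F j = G j) ->
  \sum_j w j * F j = \sum_j w j * G j.
Proof.
move=> FG; apply: eq_bigr => j _.
by move: (w_ge0 j); rewrite le_eqVlt => /predU1P[<-|/FG->]; rewrite ?mul0r.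
Qed.

Lemma full_mass_support (P : pred I) : \sum_(j | P j) w j = 1 ->
  forall j, 0 < w j -> P j.
Proof.
move=> massP j wj; apply: contraTT wj => nPj.
have mass_nP : \sum_(j | ~~ P j) w j = 0.
  by apply: (@addrI _ 1); rewrite addr0 -{1}massP -w_sum1 [RHS](bigID P).
by rewrite (psumr_eq0P (fun i _ => w_ge0 i) mass_nP nPj) ltxx.
Qed.

Lemma sum_pred_orE (P Q : pred I) : (forall j, P j -> ~~ Q j) ->
  \sum_(j | P j || Q j) w j = \sum_(j | P j) w j + \sum_(j | Q j) w j.
Proof.
move=> PnQ; rewrite (bigID P) /=; congr (_ + _); apply: eq_bigl => j.
  by rewrite andb_idl // => ->.
by case Pj: (P j); rewrite /= ?andbT // (negbTE (PnQ j Pj)).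
Qed.

Lemma pm_full_mass_support (u : I -> R) (a : R) :
  \sum_(j | u j == a) w j + \sum_(j | u j == - a) w j = 1 -> a != 0 ->
  forall j, 0 < w j -> (u j == a) || (u j == - a).
Proof.
move=> mass a_neq0; apply: full_mass_support.
by rewrite sum_pred_orE // => j /eqP ->; rewrite eq_sym eqNr.
Qed.

Lemma expect_two_point (P : pred I) (q a b : R) : \sum_(j | P j) w j = q ->
  \sum_j w j * (if P j then a else b) = q * a + (1 - q) * b.
Proof.
move=> massP; rewrite (bigID P) /=.
have mass_nP : \sum_(j | ~~ P j) w j = 1 - q.
  by rewrite -w_sum1 [in RHS](bigID P) /= massP addrAC subrr add0r.
rewrite -mass_nP -massP !mulr_suml.
by congr (_ + _); apply: eq_bigr => j; [move=> -> | move=> /negbTE ->].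
Qed.

End WeightedSums.

Section RobustModel.
Variables (R : realFieldType) (d : nat) (alpha beta p : R) (r : 'I_d).
Variables (I : finType) (w : I -> R) (xs : I -> 'rV[R]_d) (ys : I -> R).
Hypotheses (alpha_gt0 : 0 < alpha) (w_distr : is_distr w).
Hypotheses (ys_plus : \sum_(j | ys j == 1) w j = 1 / 2)
           (ys_minus : \sum_(j | ys j == -1) w j = 1 / 2).
Hypotheses (robust_plus : \sum_(j | ys j * xs j 0 r == alpha) w j = p)
           (robust_minus : \sum_(j | ys j * xs j 0 r == - alpha) w j = 1 - p).
Hypothesis nonrobust : forall i, i != r -> \sum_(j | ys j * xs j 0 i == beta) w j = 1.

Let w_ge0 := w_distr.1.
Let w_sum1 := w_distr.2.

Lemma label_sqr j : 0 < w j -> ys j * ys j = 1.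
Proof.
have mass : \sum_(j | ys j == 1) w j + \sum_(j | ys j == - 1) w j = 1.
  by rewrite ys_plus ys_minus; lra.
move=> wj; case/orP: (pm_full_mass_support w_ge0 w_sum1 mass (oner_neq0 R) wj) => /eqP ->.
  by rewrite mulr1.
by rewrite mulrNN mulr1.
Qed.

Lemma robust_coord j : 0 < w j ->
  (ys j * xs j 0 r == alpha) || (ys j * xs j 0 r == - alpha).
Proof.
move=> wj; apply: (pm_full_mass_support w_ge0 w_sum1 (u := fun j => ys j * xs j 0 r)) wj.
  by rewrite robust_plus robust_minus addrC subrK.
by rewrite gt_eqF.
Qed.

Lemma nonrobust_coord j i : 0 < w j -> i != r -> ys j * xs j 0 i = beta.
Proof.
move=> wj ir; apply/eqP.
exact: (full_mass_support w_ge0 w_sum1 (P := fun j => ys j * xs j 0 i == beta) (nonrobust ir) wj).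
Qed.

Lemma signed_coord_sum j : 0 < w j ->
  ys j * \sum_i xs j 0 i = ys j * xs j 0 r + (d - 1)%:R * beta.
Proof.
move=> wj; rewrite mulr_sumr (bigD1 r) //=; congr (_ + _).
rewrite (eq_bigr (fun _ => beta)) => [|i ir]; last exact: nonrobust_coord.
by rewrite sumr_const cardC1 card_ord mulr_natl subn1.
Qed.

Lemma signed_column_sum j : 0 < w j ->
  ys j * (\sum_i xs j 0 i + ys j) = ys j * xs j 0 r + ((d - 1)%:R * beta + 1).
Proof. by move=> wj; rewrite mulrDr signed_coord_sum // label_sqr // addrA. Qed.

Lemma signed_inner j k : 0 < w j -> 0 < w k ->
  \sum_i (ys j * xs j 0 i) * (ys k * xs k 0 i)
  = (ys j * xs j 0 r) * (ys k * xs k 0 r) + (d - 1)%:R * beta ^+ 2.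
Proof.
move=> wj wk; rewrite (bigD1 r) //=; congr (_ + _).
rewrite (eq_bigr (fun _ => beta ^+ 2)) => [|i ir]; last by rewrite !nonrobust_coord.
by rewrite sumr_const cardC1 card_ord mulr_natl subn1.
Qed.

Lemma expect_robust (F : R -> R) :
  \sum_j w j * F (ys j * xs j 0 r) = p * F alpha + (1 - p) * F (- alpha).
Proof.
rewrite -(expect_two_point w_sum1 _ _ robust_plus); apply: (eq_expect w_ge0) => j wj.
by case/orP: (robust_coord wj) => /eqP->; rewrite ?eqxx // ifF // eqNr gt_eqF.
Qed.

Variable N : nat.
Hypothesis N_gt0 : (0 < N)%N.

Lemma ftilde_std j : 0 < w j ->
  ftilde N w xs ys (Pstd R d) (Qstd R d) (xs j) (ys j)
  = (p * (alpha + ((d - 1)%:R * beta + 1)) ^+ 2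
     + (1 - p) * (- alpha + ((d - 1)%:R * beta + 1)) ^+ 2)
    * (ys j * xs j 0 r + (d - 1)%:R * beta).
Proof.
move=> wj; set A := _ + 1; set T := _ + _ * beta.
pose F i := (\sum_k xs i 0 k + ys i) ^+ 2 * (ys j * \sum_k xs j 0 k).
transitivity (\sum_i w i * F i).
  rewrite /ftilde -(expect_empirical_mean w_sum1 F N_gt0); apply: eq_bigr => t _.
  rewrite last_entry_std [ys j * _]mulrCA mulr_sumr; congr (_ * (_ * _)).
  by apply: eq_bigr => n _; rewrite /F; ring.
rewrite (eq_expect w_ge0 (G := fun i => (ys i * xs i 0 r + A) ^+ 2 * T)) => [|i wi].
  by rewrite (expect_robust (fun u => (u + A) ^+ 2 * T)); ring.
rewrite /F signed_coord_sum // -signed_column_sum // exprMn [ys i ^+ 2]expr2.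
by rewrite label_sqr // mul1r.
Qed.

Lemma ftilde_adv j : 0 < w j ->
  ftilde N w xs ys (Padv R d) (Qadv R d) (xs j) (ys j)
  = p * ((alpha + ((d - 1)%:R * beta + 1))
         * (alpha * (ys j * xs j 0 r) + (d - 1)%:R * beta ^+ 2))
    + (1 - p) * ((- alpha + ((d - 1)%:R * beta + 1))
         * (- alpha * (ys j * xs j 0 r) + (d - 1)%:R * beta ^+ 2)).
Proof.
move=> wj; set A := _ + 1; set B := _ * beta ^+ 2; set u := ys j * _.
pose F i := (\sum_k xs i 0 k + ys i) * (\sum_k xs i 0 k * xs j 0 k) * ys j.
transitivity (\sum_i w i * F i).
  rewrite /ftilde -(expect_empirical_mean w_sum1 F N_gt0); apply: eq_bigr => t _.
  rewrite last_entry_adv [ys j * _]mulrCA mulr_sumr; congr (_ * (_ * _)).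
  by apply: eq_bigr => n _; rewrite /F; ring.
rewrite (eq_expect w_ge0 (G := fun i => (ys i * xs i 0 r + A) * (ys i * xs i 0 r * u + B)))
  => [|i wi]; first by rewrite (expect_robust (fun v => (v + A) * (v * u + B))).
have inner : \sum_k (ys i * xs i 0 k) * (ys j * xs j 0 k)
             = ys i * ys j * \sum_k xs i 0 k * xs j 0 k.
  by rewrite mulr_sumr; apply: eq_bigr => k _; ring.
rewrite -signed_column_sum // -signed_inner // inner /F -[LHS]mul1r -(label_sqr wi).
ring.
Qed.

End RobustModel.

Lemma adversarial_value_le (R : realFieldType) (alpha p A B : R) :
  0 <= alpha -> 0 <= p <= 1 ->
  p * ((alpha + A) * (alpha * - alpha + B))
  + (1 - p) * ((- alpha + A) * (- alpha * - alpha + B))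
  <= (A + (2 * p - 1) * alpha) * (- ((2 * p - 1) * alpha ^+ 2) + B).
Proof.
move=> alpha_ge0 /andP[p_ge0 p_le1]; rewrite -subr_ge0.
have -> : (A + (2 * p - 1) * alpha) * (- ((2 * p - 1) * alpha ^+ 2) + B)
   - (p * ((alpha + A) * (alpha * - alpha + B))
      + (1 - p) * ((- alpha + A) * (- alpha * - alpha + B)))
   = 4%:R * p * (1 - p) * alpha ^+ 3 by ring.
by rewrite !mulr_ge0 ?exprn_ge0 ?subr_ge0.
Qed.

Theorem theorem3p5 (R : realFieldType) (d : nat) (alpha beta p : R) :
  (1 <= d)%N -> 0 < alpha -> 0 < beta -> 1 / 2 < p ->
  exists g1 g2 : R, 0 < g1 /\ 0 < g2 /\
  forall (r : 'I_d) (N : nat) (I : finType)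
         (w : I -> R) (xs : I -> 'rV[R]_d) (ys : I -> R),
    (0 < N)%N ->
    is_distr w ->
    \sum_(j | ys j == 1) w j = 1 / 2 ->
    \sum_(j | ys j == -1) w j = 1 / 2 ->
    \sum_(j | ys j * xs j 0 r == alpha) w j = p ->
    \sum_(j | ys j * xs j 0 r == - alpha) w j = 1 - p ->
    (forall i : 'I_d, i != r -> \sum_(j | ys j * xs j 0 i == beta) w j = 1) ->
    (forall j, 0 < w j -> ys j * xs j 0 r = alpha ->
       ftilde N w xs ys (Pstd R d) (Qstd R d) (xs j) (ys j)
         = g1 * (alpha + (d - 1)%:R * beta)) /\
    (forall j, 0 < w j -> ys j * xs j 0 r = - alpha ->
       ftilde N w xs ys (Pstd R d) (Qstd R d) (xs j) (ys j)
         = g1 * (- alpha + (d - 1)%:R * beta)) /\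
    (forall j, 0 < w j -> ys j * xs j 0 r = - alpha ->
       ftilde N w xs ys (Padv R d) (Qadv R d) (xs j) (ys j)
         <= g2 * (- ((2 * p - 1) * alpha ^+ 2) + (d - 1)%:R * beta ^+ 2)).
Proof.
move=> _ alpha_gt0 beta_gt0 p_gt_half.
have A_ge1 : 1 <= (d - 1)%:R * beta + 1 by rewrite lerDr mulr_ge0 // ltW.
set A := _ + 1 in A_ge1 *.
have A_gt0 : 0 < A := lt_le_trans ltr01 A_ge1.
have c_gt0 : 0 < 2 * p - 1 by lra.
exists (p * (alpha + A) ^+ 2 + (1 - p) * (- alpha + A) ^+ 2), (A + (2 * p - 1) * alpha).
split.
  have -> : p * (alpha + A) ^+ 2 + (1 - p) * (- alpha + A) ^+ 2
            = A ^+ 2 + alpha ^+ 2 + 2 * ((2 * p - 1) * alpha * A) by ring.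
  by rewrite !addr_gt0 ?exprn_gt0 ?mulr_gt0.
split; first by rewrite addr_gt0 ?mulr_gt0.
move=> r N I w xs ys N_gt0 w_distr ys_plus ys_minus robust_plus robust_minus nonrobust.
have p_le1 : p <= 1.
  by rewrite -subr_ge0 -robust_minus sumr_ge0 // => j _; apply: w_distr.1.
have std := ftilde_std alpha_gt0 w_distr ys_plus ys_minus robust_plus robust_minus nonrobust N_gt0.
have adv := ftilde_adv alpha_gt0 w_distr ys_plus ys_minus robust_plus robust_minus nonrobust N_gt0.
split; first by move=> j wj robust_j; rewrite std // robust_j.
split; first by move=> j wj robust_j; rewrite std // robust_j.
move=> j wj robust_j.
rewrite adv // robust_j; apply: adversarial_value_le; first exact: ltW.
by rewrite p_le1 andbT; lra.
Qed.
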